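(* Let $n\geq 3$, $q\geq 1$ with $\gcd(q,n-1)=1$, $k=-n+\frac{n-1}{q}$, and $\beta_0=q\delta-\theta$. Then there is an isomorphism of Coxeter systems $\sigma:(\widehat W,S)\to(\widehat W(k\Lambda_0),S(k\Lambda_0))$ with $\sigma(s_{\alpha_0})=s_{\beta_0}$ and $\sigma(s_{\alpha_i})=s_{\alpha_i}$ for $i=1,\dots,n-1$. In particular $\sigma(\widehat W_0(-\Lambda_0))=\widehat W_0(k\Lambda_0)$.
   Context: Affine $\widehat{sl}_n$ with simple roots $\alpha_0=\delta-\theta,\alpha_1,\dots,\alpha_{n-1}$ ($\theta$ the highest root of $sl_n$, $\delta$ the primitive positive imaginary root), invariant form $(\cdot|\cdot)$, real roots $\widehat\Delta^{re}$, $\alpha^\vee=2\alpha/(\alpha|\alpha)$, reflections $s_\alpha$; $\Lambda_0$ is the fundamental weight with $\Lambda_0(\alpha_j^\vee)=\delta_{0j}$, and $\widehat\rho$ satisfies $(\widehat\rho|\alpha_i^\vee)=1$ for all $i$. $\widehat W$ is the affine Weyl group with $S=\{s_{\alpha_0},\dots,s_{\alpha_{n-1}}\}$. For $\lambda$, $\widehat\Delta(\lambda)=\{\alpha\in\widehat\Delta^{re}:(\lambda+\widehat\rho|\alpha^\vee)\in\mathbb Z\}$ and $\widehat\Delta_0(\lambda)=\{\alpha\in\widehat\Delta^{re}:(\lambda+\widehat\rho|\alpha^\vee)=0\}$; $\widehat W(\lambda)$ (resp. $\widehat W_0(\lambda)$) is the group generated by reflections in $\widehat\Delta(\lambda)$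 (resp. $\widehat\Delta_0(\lambda)$), and $S(\lambda)=\{s_\alpha:\alpha\text{ simple in }\widehat\Delta^+(\lambda)\}$, so $(\widehat W(\lambda),S(\lambda))$ is a Coxeter system. Here the simple roots of $\widehat\Delta(k\Lambda_0)$ are $\beta_0,\alpha_1,\dots,\alpha_{n-1}$, $\widehat W_0(k\Lambda_0)=\{e,s_{\beta_0}\}$ and $\widehat W_0(-\Lambda_0)=\{e,s_{\alpha_0}\}$. *)

From HB Require Import structures.
From mathcomp Require Import all_boot all_order all_algebra.
Set Implicit Arguments. Unset Strict Implicit. Unset Printing Implicit Defensive.
Import Order.TTheory GRing.Theory Num.Theory.
Local Open Scope ring_scope.

(* A weight is a row vector of length n+2 over rat:
   coordinates 0..n-1 : coefficients on eps_0,...,eps_{n-1} (finite part, in gl_n coordinates),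
   coordinate n       : coefficient on Lambda_0,
   coordinate n+1     : coefficient on delta. *)
Definition V (n : nat) := 'rV[rat]_(n.+2).
Definition Mat (n : nat) := 'M[rat]_(n.+2).

Definition epsn (n i : nat) : V n := delta_mx 0 (inord i).
Definition L0 (n : nat) : V n := delta_mx 0 (inord n).
Definition dlt (n : nat) : V n := delta_mx 0 (inord n.+1).

(* normalized invariant form: (eps_i|eps_j)=delta_ij, (Lambda0|delta)=1,
   (Lambda0|Lambda0)=(delta|delta)=0, delta and Lambda0 orthogonal to the finite part *)
Definition form (n : nat) (u v : V n) : rat :=
  \sum_(i < n) u 0 (inord i) * v 0 (inord i)
  + u 0 (inord n) * v 0 (inord n.+1) + u 0 (inord n.+1) * v 0 (inord n).

Definition coroot (n : nat) (a : V n) : V n := (2 / form a a) *: a.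

Definition refl (n : nat) (a : V n) : Mat n :=
  lin1_mx (fun v : V n => v - form v (coroot a) *: a).

Definition theta (n : nat) : V n := epsn n 0 - epsn n n.-1.

Definition alpha (n : nat) (i : 'I_n) : V n :=
  if val i == 0%N then dlt n - theta n else epsn n i.-1 - epsn n i.

Definition real_root (n : nat) (v : V n) : Prop :=
  exists (i j : 'I_n) (m : int), i != j /\ v = epsn n i - epsn n j + m%:~R *: dlt n.

Definition pos_real_root (n : nat) (v : V n) : Prop :=
  exists (i j : 'I_n) (m : int), i != j /\ v = epsn n i - epsn n j + m%:~R *: dlt n
    /\ ((0 < m)%R \/ (m = 0 /\ (i < j)%N)).

(* rho-hat = rho + h^vee Lambda_0, with rho = sum_i ((n-1)/2 - i) eps_i and h^vee = n *)
Definition hrho (n : nat) : V n :=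
  \sum_(i < n) (((n%:R - 1) / 2 - i%:R) *: epsn n i) + n%:R *: L0 n.

Definition is_intQ (x : rat) : Prop := exists z : int, x = z%:~R.

Definition int_root (n : nat) (lam : V n) (a : V n) : Prop :=
  real_root a /\ is_intQ (form (lam + hrho n) (coroot a)).
Definition zero_root (n : nat) (lam : V n) (a : V n) : Prop :=
  real_root a /\ form (lam + hrho n) (coroot a) = 0.

Definition simple_int_root (n : nat) (lam : V n) (a : V n) : Prop :=
  int_root lam a /\ pos_real_root a /\
  ~ (exists b c : V n, int_root lam b /\ pos_real_root b /\
                       int_root lam c /\ pos_real_root c /\ a = b + c).

(* subgroup generated by a set of involutions (finite products of generators) *)
Inductive gen (n : nat) (G : Mat n -> Prop) : Mat n -> Prop :=
| gen1 : gen G 1%:M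
| genM (g x : Mat n) : G g -> gen G x -> gen G (g *m x).

Definition Shat (n : nat) : Mat n -> Prop := fun g => exists i : 'I_n, g = refl (alpha i).
Definition What (n : nat) : Mat n -> Prop := gen (@Shat n).
Definition Wlam (n : nat) (lam : V n) : Mat n -> Prop :=
  gen (fun g => exists a, int_root lam a /\ g = refl a).
Definition W0lam (n : nat) (lam : V n) : Mat n -> Prop :=
  gen (fun g => exists a, zero_root lam a /\ g = refl a).
Definition Slam (n : nat) (lam : V n) : Mat n -> Prop :=
  fun g => exists a, simple_int_root lam a /\ g = refl a.

(* Let [T] be the isometry of the form fixing the [eps_i] and sending [delta] to [q delta]
   and [Lambda_0] to [Lambda_0 / q]; conjugation by [T] sends [s_a] to [s_(T a)], and [T] maps
   the real root [eps_i - eps_j + m delta] to [eps_i - eps_j + m q delta].  Against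
   [k Lambda_0 + rho-hat], the root [eps_i - eps_j + M delta] pairs to [(j - i) + (n - 1) M / q],
   which is an integer iff [q] divides [M] because [gcd(q, n - 1) = 1].  Hence the integral
   roots of [k Lambda_0] are exactly the [T a], and [T a] pairs with [k Lambda_0 + rho-hat]
   as [a] does with [rho-hat - Lambda_0], so zero roots correspond too.  [T] preserves
   positivity and the height [(T rho-hat | T a) = (rho-hat | a)], so the images of the simple
   roots [alpha_i] (height 1) are indecomposable, while any other positive real root is a sum
   of two positive ones.  Since [W-hat] contains all real reflections (conjugate simple
   reflections into one another), conjugation by [T] maps [W-hat] onto [W(k Lambda_0)]. *)

From HB Require Import structures.
From mathcomp Require Import all_boot all_order all_algebra.
From mathcomp Require Import zify ring lra.
Import Order.TTheory GRing.Theory Num.Theory.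
Local Open Scope ring_scope.

Section Coordinates.
Context {n : nat}.

Lemma eq_inord (a : nat) (t : 'I_n.+2) : (a < n.+2)%N -> (t == inord a) = (a == t).
Proof. by move=> ha; rewrite -(inj_eq val_inj) /= inordK // eq_sym. Qed.

Lemma epsnE (a : nat) (t : 'I_n.+2) : (a < n.+2)%N -> epsn n a 0 t = (a == t)%:R.
Proof. by move=> ha; rewrite /epsn mxE eqxx eq_inord. Qed.

Definition aroot (i j : nat) (x : rat) : V n := epsn n i - epsn n j + x *: dlt n.

Lemma arootE i j x (t : 'I_n.+2) : (i < n)%N -> (j < n)%N ->
  aroot i j x 0 t = (i == t)%:R - (j == t)%:R + x * (n.+1 == t)%:R.
Proof. by move=> hi hj; rewrite /aroot /epsn /dlt !mxE eqxx !eq_inord //; lia. Qed.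

Lemma sum_kronecker (f : nat -> rat) (i : nat) : (i < n)%N ->
  \sum_(t < n) f t * (i == t)%:R = f i.
Proof.
move=> hi; rewrite (bigD1 (Ordinal hi)) //= eqxx mulr1 big1 ?addr0 // => t.
by rewrite -(inj_eq val_inj) eq_sym /= => /negbTE ->; rewrite mulr0.
Qed.

Lemma form_aroot (Y : V n) i j x : (i < n)%N -> (j < n)%N ->
  form Y (aroot i j x) = Y 0 (inord i) - Y 0 (inord j) + Y 0 (inord n) * x.
Proof.
move=> hi hj; rewrite /form !arootE ?inordK //.
rewrite (eq_bigr (fun t : 'I_n => Y 0 (inord t) * (i == t)%:R - Y 0 (inord t) * (j == t)%:R)).
  rewrite sumrB !(sum_kronecker (fun t => Y 0 (inord t))) //.
  have -> : (i == n) = false by lia.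
  have -> : (j == n) = false by lia.
  have -> : (i == n.+1) = false by lia.
  have -> : (j == n.+1) = false by lia.
  by rewrite eqxx (_ : (n.+1 == n) = false) //=; [ring | lia].
move=> t _; have ht := ltn_ord t.
rewrite arootE // inordK; last lia.
by rewrite (_ : (n.+1 == t) = false) ?mulr0 ?addr0 ?mulrBr //; lia.
Qed.

End Coordinates.
Arguments aroot n i j x : clear implicits.

Section Form.
Context {n : nat}.
Implicit Types u v w : V n.

Lemma form_sym u v : form u v = form v u.
Proof.
rewrite /form (eq_bigr (fun i : 'I_n => v 0 (inord i) * u 0 (inord i))) => [|i _].
  by ring.
exact: mulrC.
Qed.

Lemma formDl u v w : form (u + v) w = form u w + form v w.
Proof.
rewrite /form (eq_bigr (fun i : 'I_n =>
  u 0 (inord i) * w 0 (inord i) + v 0 (inord i) * w 0 (inord i))) => [|i _]; last first.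
  by rewrite mxE mulrDl.
rewrite big_split !mxE /=; ring.
Qed.

Lemma formZl a u w : form (a *: u) w = a * form u w.
Proof.
rewrite /form (eq_bigr (fun i : 'I_n => a * (u 0 (inord i) * w 0 (inord i)))) => [|i _];
  last first.
  by rewrite mxE mulrA.
by rewrite -mulr_sumr !mxE; ring.
Qed.

Lemma formNl u w : form (- u) w = - form u w.
Proof. by rewrite -scaleN1r formZl mulN1r. Qed.

Lemma formBl u v w : form (u - v) w = form u w - form v w.
Proof. by rewrite formDl formNl. Qed.

Lemma formDr u v w : form w (u + v) = form w u + form w v.
Proof. by rewrite form_sym formDl !(form_sym w). Qed.

Lemma formZr a u w : form w (a *: u) = a * form w u.
Proof. by rewrite form_sym formZl form_sym. Qed.

Lemma formNr u w : form w (- u) = - form w u.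
Proof. by rewrite form_sym formNl form_sym. Qed.

Lemma formBr u v w : form w (u - v) = form w u - form w v.
Proof. by rewrite formDr formNr. Qed.

End Form.

Lemma mulmx_rV_ext (R : pzSemiRingType) (m p : nat) (A B : 'M[R]_(m, p)) :
  (forall u : 'rV_m, u *m A = u *m B) -> A = B.
Proof. by move=> h; apply/row_matrixP => i; rewrite !rowE h. Qed.

Section Reflections.
Context {n : nat}.
Implicit Types a c u v : V n.

Definition reflv a v : V n := v - form v (coroot a) *: a.

Lemma reflv_is_linear a : linear (reflv a).
Proof.
move=> t u v; rewrite /reflv formDl formZl scalerDl scalerBr -!scalerA.
by rewrite addrACA opprD.
Qed.

HB.instance Definition _ a :=
  GRing.isLinear.Build rat (V n) (V n) *:%R (reflv a) (reflv_is_linear a).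

Lemma mul_refl u a : u *m refl a = reflv a u.
Proof. by rewrite /refl (mul_rV_lin1 (reflv a)). Qed.

(* Since [x / 0 = 0], an isotropic [c] has coroot [0] and [reflv c] is the identity. *)
Lemma coroot_eq0 c : form c c = 0 -> coroot c = 0.
Proof. by move=> h; rewrite /coroot h invr0 mulr0 scale0r. Qed.

Lemma form_coroot c : form c c != 0 -> form c (coroot c) = 2.
Proof. by move=> h; rewrite /coroot formZr mulfVK. Qed.

Lemma form0r u : form u 0 = 0.
Proof. by rewrite -[0 in LHS](scale0r (0 : V n)) formZr mul0r. Qed.

Lemma reflv_id c : form c c = 0 -> reflv c =1 id.
Proof. by move=> h u; rewrite /reflv coroot_eq0 // form0r scale0r subr0. Qed.

Lemma reflvK c : involutive (reflv c).
Proof.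
move=> u; have [h|h] := eqVneq (form c c) 0; first by rewrite !reflv_id.
have e : form (reflv c u) (coroot c) = - form u (coroot c).
  by rewrite /reflv formBl formZl form_coroot //; ring.
by rewrite {1}/reflv e scaleNr opprK /reflv subrK.
Qed.

Lemma reflv_iso c u v : form (reflv c u) (reflv c v) = form u v.
Proof.
have [h|h] := eqVneq (form c c) 0; first by rewrite !reflv_id.
rewrite /reflv /coroot !(formBl, formBr, formZl, formZr) (form_sym c v).
by field.
Qed.

End Reflections.

Definition conj_by {n : nat} (P M : Mat n) : Mat n := invmx P *m M *m P.

Section IsometricConjugation.
Context {n : nat} {P : Mat n}.
Hypotheses (P_unit : P \in unitmx)
  (P_iso : forall u v : V n, form (u *m P) (v *m P) = form u v).

Lemma conj_byM A B : conj_by P (A *m B) = conj_by P A *m conj_by P B.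
Proof. by rewrite /conj_by !mulmxA mulmxK. Qed.

Lemma conj_by1 : conj_by P 1%:M = 1%:M.
Proof. by rewrite /conj_by mulmx1 mulVmx. Qed.

Lemma conj_by_inj : injective (conj_by P).
Proof.
apply: (can_inj (g := fun M => P *m M *m invmx P)) => M.
by rewrite /conj_by !mulmxA mulmxV // mul1mx mulmxK.
Qed.

Lemma coroot_iso a : coroot (a *m P) = coroot a *m P.
Proof. by rewrite /coroot P_iso scalemxAl. Qed.

Lemma conj_by_refl a : conj_by P (refl a) = refl (a *m P).
Proof.
apply: mulmx_rV_ext => u; rewrite /conj_by !mulmxA mul_refl !mul_refl /reflv.
rewrite mulmxBl -scalemxAl mulmxKV // coroot_iso.
by congr (_ - _ *: _); rewrite -P_iso mulmxKV.
Qed.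

End IsometricConjugation.

Section ReflectionMatrices.
Context {n : nat}.
Implicit Types a c u v : V n.

Lemma refl_mulK c : refl c *m refl c = 1%:M.
Proof. by apply: mulmx_rV_ext => u; rewrite mulmxA !mul_refl reflvK mulmx1. Qed.

Lemma refl_unit c : refl c \in unitmx.
Proof. by case: (mulmx1_unit (refl_mulK c)). Qed.

Lemma invmx_refl c : invmx (refl c) = refl c.
Proof.
by rewrite -[RHS]mul1mx -(mulVmx (refl_unit c)) -mulmxA refl_mulK mulmx1.
Qed.

Lemma refl_conj a c : refl c *m refl a *m refl c = refl (reflv c a).
Proof.
rewrite -{1}invmx_refl -mul_refl; apply: conj_by_refl; first exact: refl_unit.
by move=> u v; rewrite !mul_refl reflv_iso.
Qed.

Lemma reflN (a : V n) : refl (- a) = refl a.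
Proof.
apply: mulmx_rV_ext => u; rewrite !mul_refl /reflv /coroot formNl formNr opprK.
by rewrite !scalerN formNr scaleNr opprK.
Qed.

End ReflectionMatrices.

Section Generation.
Context {n : nat}.
Implicit Types G H : Mat n -> Prop.

Lemma gen_mul G a b : gen G a -> gen G b -> gen G (a *m b).
Proof.
elim=> [|g x Gg _ IH] Gb; first by rewrite mul1mx.
by rewrite -mulmxA; apply: genM => //; apply: IH.
Qed.

Lemma gen_in G g : G g -> gen G g.
Proof. by move=> Gg; rewrite -[g]mulmx1; apply: genM => //; apply: gen1. Qed.

Section Morphism.
Context {f : Mat n -> Mat n}.
Hypotheses (f1 : f 1%:M = 1%:M) (fM : {morph f : A B / A *m B}).

Lemma gen_morph G H : (forall g, G g -> H (f g)) -> forall w, gen G w -> gen H (f w).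
Proof.
move=> GH w; elim=> [|g x Gg _ IH]; first by rewrite f1; apply: gen1.
by rewrite fM; apply: genM => //; apply: GH.
Qed.

Lemma gen_morph_onto G H : (forall h, H h -> exists g, gen G g /\ f g = h) ->
  forall w, gen H w -> exists v, gen G v /\ f v = w.
Proof.
move=> HG w; elim=> [|h x Hh _ [v [Gv <-]]]; first by exists 1%:M; split; [apply: gen1 | ].
have [g [Gg <-]] := HG h Hh.
by exists (g *m v); split; [apply: gen_mul | rewrite fM].
Qed.

End Morphism.
End Generation.

Definition dil_diag (n : nat) (c : rat) : 'rV[rat]_n.+2 :=
  \row_(t < n.+2) if t == n :> nat then c^-1 else if t == n.+1 :> nat then c else 1.

Definition dil (n : nat) (c : rat) : Mat n := diag_mx (dil_diag n c).

Section Dilation.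
Context {n : nat} {c : rat}.
Hypothesis c_neq0 : c != 0.
Implicit Types u v : V n.

Lemma dil_diagE a : (a < n.+2)%N ->
  dil_diag n c 0 (inord a) = if a == n then c^-1 else if a == n.+1 then c else 1.
Proof. by move=> ha; rewrite mxE inordK. Qed.

Lemma mul_dilE u t : (u *m dil n c) 0 t = u 0 t * dil_diag n c 0 t.
Proof. by rewrite mul_mx_diag mxE. Qed.

Lemma dil_unit : dil n c \in unitmx.
Proof.
rewrite unitmxE det_diag unitfE; apply/prodf_neq0 => t _; rewrite mxE.
by case: ifP; [rewrite invr_eq0 | case: ifP].
Qed.

Lemma dil_iso u v : form (u *m dil n c) (v *m dil n c) = form u v.
Proof.
rewrite /form !mul_dilE !dil_diagE // eqxx (_ : (n.+1 == n) = false) ?eqxx; last lia.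
congr (_ + _ + _).
- apply: eq_bigr => t _; have ht := ltn_ord t.
  rewrite !mul_dilE dil_diagE; last lia.
  rewrite (_ : (t == n :> nat) = false); last lia.
  by rewrite (_ : (t == n.+1 :> nat) = false) ?mulr1 //; lia.
- by rewrite mulrACA mulVf ?mulr1.
- by rewrite mulrACA mulfV ?mulr1.
Qed.

Lemma epsn_dil a : (a < n.+2)%N -> epsn n a *m dil n c = dil_diag n c 0 (inord a) *: epsn n a.
Proof.
move=> ha; apply/rowP => t; rewrite mul_dilE [RHS]mxE !epsnE //.
by have [->|] := eqVneq a t; [rewrite inord_val mulr1 mul1r | rewrite mul0r mulr0].
Qed.

Lemma dlt_dil : dlt n *m dil n c = c *: dlt n.
Proof.
rewrite epsn_dil // dil_diagE // eqxx (_ : (n.+1 == n) = false) //; lia.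
Qed.

Lemma aroot_dil i j x : (i < n)%N -> (j < n)%N ->
  aroot n i j x *m dil n c = aroot n i j (x * c).
Proof.
move=> hi hj; rewrite /aroot mulmxDl mulmxBl -scalemxAl dlt_dil scalerA.
rewrite !epsn_dil ?dil_diagE //; try lia.
by rewrite !ifF ?scale1r //; lia.
Qed.

End Dilation.

Definition pos_aroot_idx (n i j : nat) (m : int) : bool :=
  [&& (i < n)%N, (j < n)%N, i != j & (0 < m) || (m == 0) && (i < j)%N].

Section AffineRoots.
Context {n : nat}.

Lemma aroot_inord i j x t : (i < n)%N -> (j < n)%N -> (t < n)%N ->
  aroot n i j x 0 (inord t) = (i == t)%:R - (j == t)%:R.
Proof.
move=> hi hj ht; rewrite arootE // inordK; last lia.
by rewrite (_ : (n.+1 == t) = false) ?mulr0 ?addr0 //; lia.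
Qed.

Lemma aroot_inord_n i j x : (i < n)%N -> (j < n)%N -> aroot n i j x 0 (inord n) = 0.
Proof.
move=> hi hj; rewrite arootE // inordK //.
have -> : (i == n) = false by lia.
have -> : (j == n) = false by lia.
have -> : (n.+1 == n) = false by lia.
by rewrite subrr mulr0 addr0.
Qed.

Lemma form_aroot_aroot a b y i j x : (a < n)%N -> (b < n)%N -> (i < n)%N -> (j < n)%N ->
  form (aroot n a b y) (aroot n i j x) =
  ((a == i)%:R - (b == i)%:R) - ((a == j)%:R - (b == j)%:R).
Proof.
move=> ha hb hi hj.
by rewrite form_aroot // aroot_inord_n // !aroot_inord // mul0r addr0.
Qed.

Lemma aroot_norm i j x : (i < n)%N -> (j < n)%N -> i != j ->
  form (aroot n i j x) (aroot n i j x) = 2.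
Proof.
move=> hi hj hij; rewrite form_aroot_aroot // !eqxx (negbTE hij) eq_sym (negbTE hij) /=.
by rewrite subr0 sub0r opprK.
Qed.

Lemma coroot_aroot i j x : (i < n)%N -> (j < n)%N -> i != j ->
  coroot (aroot n i j x) = aroot n i j x.
Proof. by move=> hi hj hij; rewrite /coroot aroot_norm // divff ?scale1r. Qed.

Lemma aroot_add i j k x y : aroot n i j x + aroot n j k y = aroot n i k (x + y).
Proof. by rewrite /aroot scalerDl addrACA; congr (_ + _); rewrite addrA subrK. Qed.

Lemma aroot_opp i j x : - aroot n i j x = aroot n j i (- x).
Proof. by rewrite /aroot opprD opprB scaleNr. Qed.

Lemma reflv_aroot i j k x y : (i < n)%N -> (j < n)%N -> (k < n)%N ->
  i != j -> j != k -> i != k ->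
  reflv (aroot n i j x) (aroot n j k y) = aroot n i k (x + y).
Proof.
move=> hi hj hk hij hjk hik; rewrite /reflv coroot_aroot // form_aroot_aroot //.
rewrite eqxx [j == i]eq_sym [k == i]eq_sym [k == j]eq_sym.
rewrite (negbTE hij) (negbTE hik) (negbTE hjk) /= subrr sub0r subr0 scaleN1r opprK.
by rewrite addrC aroot_add.
Qed.

Lemma dlt_sub_theta x : x *: dlt n - theta n = aroot n n.-1 0 x.
Proof. by rewrite /aroot /theta opprB addrC. Qed.

Lemma alpha0E (t : 'I_n) : val t = 0%N -> alpha t = aroot n n.-1 0 1.
Proof. by move=> h; rewrite /alpha h eqxx -dlt_sub_theta scale1r. Qed.

Lemma alphaSE (t : 'I_n) : (0 < val t)%N -> alpha t = aroot n t.-1 t 0.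
Proof.
by move=> h; rewrite /alpha ifF ?/aroot ?scale0r ?addr0 //; lia.
Qed.

Lemma real_rootP (a : V n) : real_root a <->
  exists i j (m : int), [/\ (i < n)%N, (j < n)%N, i != j & a = aroot n i j m%:~R].
Proof.
split=> [[i [j [m [hij ->]]]]|[i [j [m [hi hj hij ->]]]]].
  by exists i, j, m.
by exists (Ordinal hi), (Ordinal hj), m.
Qed.

Lemma pos_real_rootP (a : V n) : pos_real_root a <->
  exists i j (m : int), pos_aroot_idx n i j m /\ a = aroot n i j m%:~R.
Proof.
split=> [[i [j [m [hij [-> hm]]]]]|[i [j [m [/and4P [hi hj hij hm] ->]]]]].
  exists i, j, m; split => //; rewrite /pos_aroot_idx !ltn_ord hij.
  by case: hm => [->|[-> ->]].
exists (Ordinal hi), (Ordinal hj), m; do !split => //.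
by case/orP: hm => [|/andP [/eqP]]; [left | right].
Qed.

Lemma pos_real_root_real (a : V n) : pos_real_root a -> real_root a.
Proof. by case=> i [j [m [hij [-> _]]]]; exists i, j, m. Qed.

Lemma coroot_real_root {a : V n} : real_root a -> a = coroot a.
Proof. by case/real_rootP=> i [j [m [hi hj hij ->]]]; rewrite coroot_aroot. Qed.

Lemma alpha_pos (t : 'I_n) : (2 <= n)%N -> pos_real_root (alpha t).
Proof.
move=> hn; apply/pos_real_rootP; have ht := ltn_ord t.
case: (posnP t) => h.
  by exists n.-1, 0%N, 1; rewrite alpha0E // /pos_aroot_idx; split => //; lia.
exists t.-1, (val t), 0; rewrite alphaSE // /pos_aroot_idx ltxx eqxx /=; split => //; lia.
Qed.

Lemma L0_inord t : (t < n)%N -> L0 n 0 (inord t) = 0.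
Proof.
move=> ht; rewrite epsnE // inordK; last lia.
by have -> : (n == t) = false by lia.
Qed.

Lemma L0_inord_n : L0 n 0 (inord n) = 1.
Proof. by rewrite epsnE // inordK // eqxx. Qed.

Lemma hrhoE (t : 'I_n.+2) :
  hrho n 0 t = \sum_(i < n) ((n%:R - 1) / 2 - i%:R) * (i == t :> nat)%:R
               + n%:R * (n == t :> nat)%:R.
Proof.
rewrite /hrho mxE summxE; congr (_ + _).
  by apply: eq_bigr => i _; rewrite mxE epsnE //; have := ltn_ord i; lia.
by rewrite mxE epsnE.
Qed.

Lemma hrho_inord t : (t < n)%N -> hrho n 0 (inord t) = (n%:R - 1) / 2 - t%:R.
Proof.
move=> ht; rewrite hrhoE inordK; last lia.
rewrite (eq_bigr (fun i : 'I_n => ((n%:R - 1) / 2 - i%:R) * (t == i)%:R)).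
  rewrite (sum_kronecker (fun i => (n%:R - 1) / 2 - i%:R)) //.
  have -> : (n == t) = false by lia.
  by rewrite mulr0 addr0.
by move=> i _; rewrite eq_sym.
Qed.

Lemma hrho_inord_n : hrho n 0 (inord n) = n%:R.
Proof.
rewrite hrhoE inordK // eqxx mulr1 big1 ?add0r // => i _.
have -> : (i == n :> nat) = false by have := ltn_ord i; lia.
by rewrite mulr0.
Qed.

Lemma form_L0_aroot i j x : (i < n)%N -> (j < n)%N -> form (L0 n) (aroot n i j x) = x.
Proof. by move=> hi hj; rewrite form_aroot // L0_inord_n !L0_inord // subrr add0r mul1r. Qed.

Lemma form_hrho_aroot i j x : (i < n)%N -> (j < n)%N ->
  form (hrho n) (aroot n i j x) = (j%:R - i%:R) + n%:R * x.
Proof. by move=> hi hj; rewrite form_aroot // hrho_inord_n !hrho_inord //; ring. Qed.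

Lemma hrho_alpha (t : 'I_n) : form (hrho n) (alpha t) = 1.
Proof.
have ht := ltn_ord t; case: (posnP t) => h.
  by rewrite alpha0E // form_hrho_aroot -?subn1 ?natrB //; try lia; ring.
rewrite alphaSE // form_hrho_aroot -?subn1 ?natrB //; try lia; ring.
Qed.

Lemma hrho_pos (a : V n) : pos_real_root a -> 1 <= form (hrho n) a.
Proof.
case/pos_real_rootP=> i [j [m [/and4P [hi hj _ hm] ->]]].
rewrite form_hrho_aroot //.
have hin : (i%:R + 1 <= n%:R :> rat) by rewrite natr1 ler_nat.
have hj0 : (0 <= j%:R :> rat) by rewrite ler0n.
case/orP: hm => [hm|/andP [/eqP -> hij]].
  have hm1 : 1 <= m%:~R :> rat by rewrite ler1z.
  have : n%:R <= n%:R * m%:~R :> rat by rewrite ler_peMr.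
  lra.
have : (i%:R + 1 <= j%:R :> rat) by rewrite natr1 ler_nat.
rewrite mulr0; lra.
Qed.

End AffineRoots.

Section HatReflections.
Context {n : nat}.
Hypothesis n_ge3 : (3 <= n)%N.

Lemma What_refl_reflv (a c : V n) : What (refl c) -> What (refl a) -> What (refl (reflv c a)).
Proof. by rewrite /What -refl_conj => Wc Wa; apply: gen_mul => //; apply: gen_mul. Qed.

Lemma exists_third_index i j : exists2 k, (k < n)%N & (k != i) && (k != j).
Proof.
have [k [hk hki hkj]] : exists k, [/\ (k < n)%N, k != i & k != j].
  by case: (ltnP i 2) => hi; case: (ltnP j 2) => hj;
    [exists 2%N | exists (1 - i)%N | exists (1 - j)%N | exists 0%N]; split; lia.
by exists k; rewrite ?hki ?hkj.
Qed.

Definition What_level (x : rat) : Prop :=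
  forall i j, (i < n)%N -> (j < n)%N -> i != j -> What (refl (aroot n i j x)).

Lemma What_refl_alpha (t : 'I_n) : What (refl (alpha t)).
Proof. by apply: gen_in; exists t. Qed.

Lemma What_level0 : What_level 0.
Proof.
suff lt_case j i : (i < j)%N -> (j < n)%N -> What (refl (aroot n i j 0)).
  move=> i j hi hj hij; case: (ltnP i j) => [hlt|hji]; first exact: lt_case.
  by rewrite -reflN aroot_opp oppr0; apply: lt_case => //; lia.
elim: j => [//|j IH] hij hj.
have W : What (refl (aroot n j j.+1 0)).
  by rewrite -(alphaSE (Ordinal hj)) //; exact: What_refl_alpha.
have [->//|hij'] := eqVneq i j.
rewrite -[0 : rat]addr0 -(reflv_aroot i j); try lia.
by apply: What_refl_reflv W; apply: IH; lia.
Qed.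

(* Conjugation by the level-0 reflections moves the indices of a root to any other pair. *)
Lemma What_level_transport x i j : What (refl (aroot n i j x)) ->
  (i < n)%N -> (j < n)%N -> i != j -> What_level x.
Proof.
have move1 i' i1 j1 : (i' < n)%N -> (i1 < n)%N -> (j1 < n)%N -> i' != j1 -> i1 != j1 ->
    What (refl (aroot n i1 j1 x)) -> What (refl (aroot n i' j1 x)).
  move=> hi' hi1 hj1 hi'j1 hi1j1 W; have [->//|hi'i1] := eqVneq i' i1.
  rewrite -[x]add0r -(reflv_aroot i' i1) //.
  by apply: What_refl_reflv => //; apply: What_level0.
have move2 j' i1 j1 : (j' < n)%N -> (i1 < n)%N -> (j1 < n)%N -> i1 != j' -> i1 != j1 ->
    What (refl (aroot n i1 j1 x)) -> What (refl (aroot n i1 j' x)).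
  move=> hj' hi1 hj1 hi1j' hi1j1 W; have [->//|hj1j'] := eqVneq j' j1.
  rewrite -[x]addr0 -(reflv_aroot i1 j1 j') //; last by rewrite eq_sym.
  by apply: What_refl_reflv => //; apply: What_level0; rewrite // eq_sym.
move=> W hi hj hij i' j' hi' hj' hi'j'.
have [hi'j|hi'j] := eqVneq i' j; last first.
  exact: (move2 j' i' j hj' hi' hj hi'j' hi'j (move1 i' i j hi' hi hj hi'j hij W)).
subst i'; have [k hk /andP [hki hkj]] := exists_third_index i j.
rewrite eq_sym in hki; rewrite eq_sym in hkj.
have Wik := move2 k i j hk hi hj hki hij W.
exact: (move2 j' j k hj' hj hk hi'j' hkj (move1 j i k hj hi hk hkj hki Wik)).
Qed.

Lemma What_level1 : What_level 1.
Proof.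
have h0 : (0 < n)%N by lia.
have W := What_refl_alpha (Ordinal h0); rewrite alpha0E // in W.
by apply: (What_level_transport _ _ _ W); lia.
Qed.

Lemma What_levelS x : What_level x -> What_level (x + 1).
Proof.
move=> Wx i j hi hj hij; have [k hk /andP [hki hkj]] := exists_third_index i j.
rewrite -(reflv_aroot i k) //; try by rewrite eq_sym.
by apply: What_refl_reflv; [apply: Wx | apply: What_level1]; rewrite // eq_sym.
Qed.

Lemma What_levelN x : What_level x -> What_level (- x).
Proof.
move=> Wx i j hi hj hij; rewrite -aroot_opp reflN.
by apply: Wx => //; rewrite eq_sym.
Qed.

Lemma What_level_int (m : int) : What_level m%:~R.
Proof.
have level_nat (k : nat) : What_level k%:R.
  elim: k => [|k IH]; first exact: What_level0.
  by rewrite -addn1 natrD; apply: What_levelS.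
by case: m => k; rewrite ?NegzE ?intrN -pmulrn; [|apply: What_levelN].
Qed.

Lemma What_refl_real_root (a : V n) : real_root a -> What (refl a).
Proof. by case/real_rootP=> i [j [m [hi hj hij ->]]]; apply: What_level_int. Qed.

End HatReflections.

Section PositiveRoots.
Context {n : nat}.
Hypothesis n_ge3 : (3 <= n)%N.

Lemma pos_aroot_idx_alpha_or_add i j m : pos_aroot_idx n i j m ->
  (exists t : 'I_n, aroot n i j m%:~R = alpha t) \/
  (exists k a b, [/\ pos_aroot_idx n i k a, pos_aroot_idx n k j b & m = a + b]).
Proof.
rewrite /pos_aroot_idx => /and4P [hi hj hij /orP [hm|/andP [/eqP -> hlt]]]; last first.
  have [ej|hj'] := eqVneq j i.+1.
    have hj0 : (0 < (Ordinal hj : 'I_n))%N by rewrite /= ej.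
    by left; exists (Ordinal hj); rewrite alphaSE //= ej.
  by right; exists i.+1, 0, 0; split; lia.
have [ej|hj0] := posnP j; last first.
  right; have [ei|hi0] := eqVneq i 0%N; last by exists 0%N, m, 0; split; lia.
  by exists (if j == 1%N then 2%N else 1%N), 0, m; case: eqP; split; lia.
have [hin|ein] := ltnP i n.-1; first by right; exists n.-1, 0, m; split; lia.
have [em|hm1] := eqVneq m 1; last by right; exists 1%N, 1, (m - 1); split; lia.
have h0 : (0 < n)%N by lia.
left; exists (Ordinal h0); rewrite alpha0E // ej em.
by congr aroot; lia.
Qed.

Lemma pos_real_root_alpha_or_add (a : V n) : pos_real_root a ->
  (exists t : 'I_n, a = alpha t) \/
  (exists b c, [/\ pos_real_root b, pos_real_root c & a = b + c]).
Proof.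
case/pos_real_rootP=> i [j [m [hp ->]]].
case: (pos_aroot_idx_alpha_or_add _ _ _ hp) => [[t ->]|[k [x [y [hik hkj ->]]]]].
  by left; exists t.
right; exists (aroot n i k x%:~R), (aroot n k j y%:~R).
split; last by rewrite aroot_add intrD.
  by apply/pos_real_rootP; exists i, k, x.
by apply/pos_real_rootP; exists k, j, y.
Qed.

End PositiveRoots.

Section RescaledRoots.
Context {n : nat} (q : nat).
Hypotheses (n_ge3 : (3 <= n)%N) (q_gt0 : (0 < q)%N) (q_coprime : coprime q n.-1).

Local Notation Q := (q%:R : rat).
Local Notation P := (dil n Q).
Local Notation lam := ((- n%:R + (n%:R - 1) / Q) *: L0 n).

Lemma Q_neq0 : Q != 0.
Proof. by rewrite pnatr_eq0 -lt0n. Qed.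

Lemma natr_pred : (n.-1%:R : rat) = n%:R - 1.
Proof. by rewrite -subn1 natrB //; lia. Qed.

Lemma form_lam_aroot i j x : (i < n)%N -> (j < n)%N ->
  form (lam + hrho n) (aroot n i j x) = (j%:R - i%:R) + (n%:R - 1) / Q * x.
Proof.
by move=> hi hj; rewrite formDl formZl form_L0_aroot // form_hrho_aroot //; ring.
Qed.

Lemma form_neg_L0_aroot i j x : (i < n)%N -> (j < n)%N ->
  form (- L0 n + hrho n) (aroot n i j x) = (j%:R - i%:R) + (n%:R - 1) * x.
Proof.
by move=> hi hj; rewrite formDl formNl form_L0_aroot // form_hrho_aroot //; ring.
Qed.

Lemma aroot_dilq i j (m : int) : (i < n)%N -> (j < n)%N ->
  aroot n i j m%:~R *m P = aroot n i j (m * q%:Z)%:~R.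
Proof. by move=> hi hj; rewrite aroot_dil ?intrM //; exact: Q_neq0. Qed.

(* [(j - i) + (n - 1) M / q] is an integer iff [q] divides [(n - 1) M], iff [q] divides [M]. *)
Lemma dvdz_of_lam_int i j (M : int) : (i < n)%N -> (j < n)%N ->
  is_intQ (form (lam + hrho n) (aroot n i j M%:~R)) -> (q%:Z %| M)%Z.
Proof.
move=> hi hj; rewrite form_lam_aroot // => -[z hz].
have e : ((z - (j%:Z - i%:Z)) * q%:Z = n.-1%:Z * M)%R.
  apply: (@intr_inj rat); rewrite !intrM intrB -hz intrB -!pmulrn natr_pred.
  by field; exact: Q_neq0.
have : (q%:Z %| n.-1%:Z * M)%Z by rewrite -e dvdz_mull.
by rewrite !dvdzE abszM !absz_nat Gauss_dvdr.
Qed.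

Lemma real_root_dil (a : V n) : real_root a -> real_root (a *m P).
Proof.
case/real_rootP=> i [j [m [hi hj hij ->]]]; rewrite aroot_dilq //.
by apply/real_rootP; exists i, j, (m * q%:Z).
Qed.

Lemma form_lam_dil (a : V n) : real_root a ->
  form (lam + hrho n) (a *m P) = form (- L0 n + hrho n) a.
Proof.
case/real_rootP=> i [j [m [hi hj hij ->]]].
rewrite aroot_dil //; last exact: Q_neq0.
by rewrite form_lam_aroot // form_neg_L0_aroot //; field; exact: Q_neq0.
Qed.

Lemma form_neg_L0_int (a : V n) : real_root a -> is_intQ (form (- L0 n + hrho n) a).
Proof.
case/real_rootP=> i [j [m [hi hj hij ->]]]; rewrite form_neg_L0_aroot // -natr_pred.
by exists (j%:Z - i%:Z + n.-1%:Z * m); rewrite intrD intrB intrM -!pmulrn.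
Qed.

Lemma int_root_lamP (b : V n) : int_root lam b <-> exists2 a, real_root a & b = a *m P.
Proof.
split=> [[rb]|[a ra ->]]; last first.
  split; first exact: real_root_dil.
  rewrite -coroot_real_root; last exact: real_root_dil.
  by rewrite form_lam_dil //; exact: form_neg_L0_int.
move: (rb) => /real_rootP [i [j [M [hi hj hij eb]]]].
rewrite -coroot_real_root // eb => /(dvdz_of_lam_int _ _ _ hi hj) hd.
exists (aroot n i j (M %/ q)%Z%:~R); first by apply/real_rootP; exists i, j, (M %/ q)%Z.
by rewrite aroot_dilq // divzK.
Qed.

Lemma zero_root_lamP (b : V n) :
  zero_root lam b <-> exists2 a, zero_root (- L0 n) a & b = a *m P.
Proof.
split=> [[rb b0]|[a [ra a0] ->]].
  have [a ra eb] : exists2 a, real_root a & b = a *m P.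
    by apply/int_root_lamP; split; rewrite // b0; exists 0.
  exists a => //; split; rewrite // -coroot_real_root // -form_lam_dil //.
  by rewrite -eb (coroot_real_root rb).
split; first exact: real_root_dil.
rewrite -coroot_real_root; last exact: real_root_dil.
by rewrite form_lam_dil // (coroot_real_root ra).
Qed.

Lemma pos_aroot_idx_mulq i j (m : int) :
  pos_aroot_idx n i j (m * q%:Z) = pos_aroot_idx n i j m.
Proof.
have q0 : (0 < q%:Z)%R by rewrite ltz_nat.
by rewrite /pos_aroot_idx pmulr_lgt0 // mulf_eq0 (negbTE (lt0r_neq0 q0)) orbF.
Qed.

Lemma pos_int_root_lamP (b : V n) :
  int_root lam b /\ pos_real_root b <-> exists2 a, pos_real_root a & b = a *m P.
Proof.
split=> [[ib /pos_real_rootP [i [j [M [hp eb]]]]]|[a pa ->]].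
  have /and4P [hi hj _ _] := hp.
  have hd : (q%:Z %| M)%Z.
    by case: ib => rb; rewrite -(coroot_real_root rb) eb; apply: dvdz_of_lam_int.
  exists (aroot n i j (M %/ q)%Z%:~R); last by rewrite aroot_dilq // divzK.
  by apply/pos_real_rootP; exists i, j, (M %/ q)%Z; rewrite -pos_aroot_idx_mulq divzK.
split; first by apply/int_root_lamP; exists a => //; exact: pos_real_root_real.
case/pos_real_rootP: pa => i [j [m [hp ->]]]; have /and4P [hi hj _ _] := hp.
by apply/pos_real_rootP; exists i, j, (m * q%:Z); rewrite pos_aroot_idx_mulq aroot_dilq.
Qed.

Lemma hrho_dil_ge1 {b : V n} : int_root lam b -> pos_real_root b -> 1 <= form (hrho n *m P) b.
Proof.
move=> ib pb; have [a pa ->] := (pos_int_root_lamP b).1 (conj ib pb).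
by rewrite dil_iso ?hrho_pos //; exact: Q_neq0.
Qed.

Lemma simple_int_root_lamP (b : V n) :
  simple_int_root lam b <-> exists t : 'I_n, b = alpha t *m P.
Proof.
have pos_dil a : pos_real_root a -> int_root lam (a *m P) /\ pos_real_root (a *m P).
  by move=> pa; apply/pos_int_root_lamP; exists a.
split=> [[ib [pb indec]]|[t ->]].
  have [a pa eb] := (pos_int_root_lamP b).1 (conj ib pb).
  case: (pos_real_root_alpha_or_add n_ge3 _ pa) => [[t et]|[a1 [a2 [p1 p2 ea]]]].
    by exists t; rewrite eb et.
  have [[i1 p1'] [i2 p2']] := (pos_dil a1 p1, pos_dil a2 p2).
  by case: indec; exists (a1 *m P), (a2 *m P); rewrite eb ea mulmxDl.
have [ia pa] := pos_dil _ (alpha_pos t (ltnW n_ge3)).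
split=> //; split=> // -[c [d [ic [pc [id [pd ecd]]]]]].
have := hrho_dil_ge1 ic pc; have := hrho_dil_ge1 id pd.
have : form (hrho n *m P) (alpha t *m P) = 1.
  by rewrite dil_iso ?hrho_alpha //; exact: Q_neq0.
rewrite ecd formDr; lra.
Qed.

Local Notation sigma := (conj_by P).

Lemma conj_dil1 : sigma 1%:M = 1%:M.
Proof. exact: conj_by1 (dil_unit Q_neq0). Qed.

Lemma conj_dilM : {morph sigma : A B / A *m B}.
Proof. exact: conj_byM (dil_unit Q_neq0). Qed.

Lemma conj_dil_inj : injective sigma.
Proof. exact: conj_by_inj (dil_unit Q_neq0). Qed.

Lemma conj_dil_refl (a : V n) : sigma (refl a) = refl (a *m P).
Proof. exact: conj_by_refl (dil_unit Q_neq0) (dil_iso Q_neq0) a. Qed.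

Lemma conj_dil_What w : What w -> Wlam lam (sigma w).
Proof.
apply: (gen_morph conj_dil1 conj_dilM) => _ [t ->]; rewrite conj_dil_refl.
exists (alpha t *m P); split => //; apply/int_root_lamP; exists (alpha t) => //.
exact/pos_real_root_real/alpha_pos/ltnW.
Qed.

Lemma conj_dil_onto_Wlam w' : Wlam lam w' -> exists w, What w /\ sigma w = w'.
Proof.
apply: (gen_morph_onto conj_dil1 conj_dilM) => _ [b [/int_root_lamP [a ra ->] ->]].
by exists (refl a); split; [exact: What_refl_real_root | rewrite conj_dil_refl].
Qed.

Lemma conj_dil_Shat s : Shat s -> Slam lam (sigma s).
Proof.
move=> [t ->]; rewrite conj_dil_refl; exists (alpha t *m P); split => //.
by apply/simple_int_root_lamP; exists t.
Qed.

Lemma conj_dil_onto_Slam s' : Slam lam s' -> exists s, Shat s /\ sigma s = s'.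
Proof.
move=> [b [/simple_int_root_lamP [t ->] ->]].
by exists (refl (alpha t)); split; [exists t | rewrite conj_dil_refl].
Qed.

Lemma conj_dil_W0 w : W0lam (- L0 n) w -> W0lam lam (sigma w).
Proof.
apply: (gen_morph conj_dil1 conj_dilM) => _ [a [za ->]]; rewrite conj_dil_refl.
by exists (a *m P); split => //; apply/zero_root_lamP; exists a.
Qed.

Lemma conj_dil_onto_W0 w' : W0lam lam w' -> exists w, W0lam (- L0 n) w /\ sigma w = w'.
Proof.
apply: (gen_morph_onto conj_dil1 conj_dilM) => _ [b [/zero_root_lamP [a za ->] ->]].
by exists (refl a); split; [apply: gen_in; exists a | rewrite conj_dil_refl].
Qed.

Lemma conj_dil_alpha0 (t : 'I_n) :
  val t = 0%N -> sigma (refl (alpha t)) = refl (Q *: dlt n - theta n).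
Proof.
move=> t0; rewrite conj_dil_refl alpha0E // (aroot_dil Q_neq0); try lia.
by rewrite mul1r dlt_sub_theta.
Qed.

Lemma conj_dil_alphaS (t : 'I_n) : (0 < val t)%N -> sigma (refl (alpha t)) = refl (alpha t).
Proof.
move=> t_gt0; have ht := ltn_ord t.
by rewrite conj_dil_refl alphaSE // (aroot_dil Q_neq0) ?mul0r //; lia.
Qed.

End RescaledRoots.

Theorem mainTheorem6 (n q : nat) :
  (3 <= n)%N -> (1 <= q)%N -> coprime q n.-1 ->
  let k : rat := - n%:R + (n%:R - 1) / q%:R in
  let lam : V n := k *: L0 n in
  let beta0 : V n := q%:R *: dlt n - theta n in
  exists sigma : Mat n -> Mat n,
    (* sigma is a group isomorphism @What n -> Wlam lam *)
    (forall w, @What n w -> Wlam lam (sigma w)) /\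
    (forall w1 w2, @What n w1 -> @What n w2 -> sigma w1 = sigma w2 -> w1 = w2) /\
    (forall w', Wlam lam w' -> exists w, @What n w /\ sigma w = w') /\
    (forall w1 w2, @What n w1 -> @What n w2 -> sigma (w1 *m w2) = sigma w1 *m sigma w2) /\
    (* mapping S onto S(k Lambda_0) *)
    (forall s, @Shat n s -> Slam lam (sigma s)) /\
    (forall s', Slam lam s' -> exists s, @Shat n s /\ sigma s = s') /\
    (* prescribed values on generators *)
    (forall i : 'I_n, val i = 0%N -> sigma (refl (alpha i)) = refl beta0) /\
    (forall i : 'I_n, (0 < val i)%N -> sigma (refl (alpha i)) = refl (alpha i)) /\
    (* sigma(W_0(-Lambda_0)) = W_0(k Lambda_0) *)
    (forall w, W0lam (- L0 n) w -> W0lam lam (sigma w)) /\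
    (forall w', W0lam lam w' -> exists w, W0lam (- L0 n) w /\ sigma w = w').
Proof.
move=> n_ge3 q_gt0 q_coprime k lam beta0.
exists (conj_by (dil n q%:R)); do !split.
- exact: conj_dil_What.
- by move=> w1 w2 _ _; apply: conj_dil_inj.
- exact: conj_dil_onto_Wlam.
- by move=> w1 w2 _ _; apply: conj_dilM.
- exact: conj_dil_Shat.
- exact: conj_dil_onto_Slam.
- exact: conj_dil_alpha0.
- exact: conj_dil_alphaS.
- exact: conj_dil_W0.
- exact: conj_dil_onto_W0.
Qed.
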